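(* Let $d>0$, let $\mathcal{S}$ be the 4-PAM constellation labeled by the Gray labeling $\boldsymbol{q}=[1,0,2,3]$ or $\boldsymbol{q}=[2,0,1,3]$, and let $\mathcal{B}\subset\{0,1\}^{2N}$ be any binary linear code with at least two codewords. Then $\mathsf{L}(\mathcal{B})=0$.
   Context: $\mathcal{S}=\{s_1,s_2,s_3,s_4\}$ with $s_1=-3d$, $s_2=-d$, $s_3=d$, $s_4=3d$. A labeling is a bijection $\Phi_{\mathcal{S}}:\{0,1\}^2\to\mathcal{S}$, described by $\boldsymbol{q}=[q_1,\dots,q_4]$ where $q_i$ is the integer whose two-bit representation (most significant bit first) is $\Phi_{\mathcal{S}}^{-1}(s_i)$. A codeword of $\mathcal{B}$ is written $\boldsymbol{b}=[\boldsymbol{b}[1],\dots,\boldsymbol{b}[N]]$ with $\boldsymbol{b}[k]=[b_1[k],b_2[k]]$, and the CM code is $\mathcal{X}=\{[\Phi_{\mathcal{S}}(\boldsymbol{b}[1]),\dots,\Phi_{\mathcal{S}}(\boldsymbol{b}[N])]:\boldsymbol{b}\in\mathcal{B}\}$. For $\boldsymbol{x},\hat{\boldsymbol{x}}\in\mathcal{S}^N$ and each $k$ with $x[k]\neq\hat{x}[k]$: $\mu^{\mathcal{X}}_k=\sigma^{2,\mathcal{X}}_k=(x[k]-\hat{x}[k])^2/(4d^2)$; $\mu^{\mathcal{B}}_k=\sigma^{2,\mathcal{B}}_k=(x[k]-\hat{x}[k])^2/(4d^2)$ except that if $\{x[k],\hat{x}[k]\}=\{s_1,s_4\}$ then $\mu^{\mathcal{B}}_k=3$,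 $\sigma^{2,\mathcal{B}}_k=1$. Summing over $k$ with $x[k]\neq\hat{x}[k]$, $a^{\mathcal{X}}(\boldsymbol{x},\hat{\boldsymbol{x}})=\sum_k\mu^{\mathcal{X}}_k/\sqrt{\sum_k\sigma^{2,\mathcal{X}}_k}$ and $a^{\mathcal{B}}(\boldsymbol{x},\hat{\boldsymbol{x}})=\sum_k\mu^{\mathcal{B}}_k/\sqrt{\sum_k\sigma^{2,\mathcal{B}}_k}$ (normalized distances of the symbol-wise ML decoder and of the bit-wise max-log decoder under the zero-crossing approximation). The asymptotic loss of the code is $\mathsf{L}(\mathcal{B})=20\log_{10}\Big(\min_{\boldsymbol{x}\neq\hat{\boldsymbol{x}}\in\mathcal{X}}a^{\mathcal{X}}(\boldsymbol{x},\hat{\boldsymbol{x}})\big/\min_{\boldsymbol{x}\neq\hat{\boldsymbol{x}}\in\mathcal{X}}a^{\mathcal{B}}(\boldsymbol{x},\hat{\boldsymbol{x}})\Big)$ dB. *)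

From HB Require Import structures.
From mathcomp Require Import all_boot all_order all_algebra all_fingroup.
From mathcomp Require Import all_classical all_reals exp.
Set Implicit Arguments. Unset Strict Implicit. Unset Printing Implicit Defensive.
Import Order.TTheory GRing.Theory Num.Theory.
Local Open Scope ring_scope.

Section Defs.
Variable R : realType.

Definition log10 (x : R) : R := ln x / ln 10.

(* 4-PAM constellation: s_{i+1} = (2 i - 3) d for i : 'I_4,
   i.e. s_1 = -3d, s_2 = -d, s_3 = d, s_4 = 3d (0-based indices here). *)
Definition pam (d : R) (i : 'I_4) : R := (2 * i%:R - 3) * d.

Definition bits2 (b : bool * bool) : 'I_4 := inord (2 * b.1 + b.2)%N.

(* Labeling described by q : q i = integer whose 2-bit representation is
   Phi^{-1}(s_i); hence Phi b = s_i with q i = bits2 b. *)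
Definition Phi (d : R) (q : {perm 'I_4}) (b : bool * bool) : R :=
  pam d (q^-1 (bits2 b))%g.

(* Codewords b = [b[1], ..., b[N]] with b[k] = [b_1[k], b_2[k]]. *)
Definition cw (N : nat) := {ffun 'I_N -> bool * bool}.

Definition cw0 (N : nat) : cw N := [ffun _ => (false, false)].
Definition cw_add (N : nat) (b b' : cw N) : cw N :=
  [ffun k => (addb (b k).1 (b' k).1, addb (b k).2 (b' k).2)].

Definition binary_linear_code (N : nat) (B : {set cw N}) : Prop :=
  cw0 N \in B /\ forall b b', b \in B -> b' \in B -> cw_add b b' \in B.

Definition modulate (N : nat) (d : R) (q : {perm 'I_4}) (b : cw N)
  : {ffun 'I_N -> R} := [ffun k => Phi d q (b k)].

Definition muX (d x xh : R) : R := (x - xh) ^+ 2 / (4 * d ^+ 2).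
Definition is_s1s4 (d x xh : R) : bool :=
  ((x == - (3 * d)) && (xh == 3 * d)) || ((x == 3 * d) && (xh == - (3 * d))).
Definition muB (d x xh : R) : R := if is_s1s4 d x xh then 3 else muX d x xh.
Definition sigB (d x xh : R) : R := if is_s1s4 d x xh then 1 else muX d x xh.

Definition aX (N : nat) (d : R) (x xh : {ffun 'I_N -> R}) : R :=
  (\sum_(k | x k != xh k) muX d (x k) (xh k)) /
    Num.sqrt (\sum_(k | x k != xh k) muX d (x k) (xh k)).

Definition aB (N : nat) (d : R) (x xh : {ffun 'I_N -> R}) : R :=
  (\sum_(k | x k != xh k) muB d (x k) (xh k)) /
    Num.sqrt (\sum_(k | x k != xh k) sigB d (x k) (xh k)).

Definition finmin (s : seq R) : R := foldr Num.min (head 0 s) s.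

Definition mindist (N : nat) (a : {ffun 'I_N -> R} -> {ffun 'I_N -> R} -> R)
  (d : R) (q : {perm 'I_4}) (B : {set cw N}) : R :=
  finmin [seq a (modulate d q p.1) (modulate d q p.2) |
          p <- enum [set p : cw N * cw N | [&& p.1 \in B, p.2 \in B &
                      modulate d q p.1 != modulate d q p.2]]].

Definition loss (N : nat) (d : R) (q : {perm 'I_4}) (B : {set cw N}) : R :=
  20 * log10 (mindist (@aX N d) d q B / mindist (@aB N d) d q B).

End Defs.

From HB Require Import structures.
From mathcomp Require Import all_boot all_order all_algebra all_fingroup.
From mathcomp Require Import all_classical all_reals exp.
From mathcomp Require Import ring lra.
Import Order.TTheory GRing.Theory Num.Theory.
Local Open Scope ring_scope.

(* Under either Gray labeling the all-zero label is the inner point s2, and a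
   check of the 16 label pairs shows: if c <> c', then the symbols of the
   labels 0 and c + c' are never {s1, s4}, are no farther apart than those of
   c and c', and are adjacent when the latter are {s1, s4}.  For codewords
   b <> b' of a linear code, (0, b + b') is again a pair of codewords differing
   exactly where b and b' do; by the check, the max-log correction never
   applies to it, so both normalized distances agree on it, and it is no
   farther than (b, b') for either.  Hence the two minima coincide. *)

Section Finmin.
Variable R : realType.

Lemma finmin_le {s : seq R} {x : R} : x \in s -> finmin s <= x.
Proof.
rewrite /finmin; move: (head 0 s) => a; elim: s => //= y s IH.
rewrite inE => /orP [/eqP->|/IH le_x]; first by rewrite ge_min lexx.
by rewrite ge_min le_x orbT.
Qed.

Lemma finmin_in (s : seq R) : s != [::] -> finmin s \in s.
Proof.
have foldr_min_in a : foldr Num.min a s \in a :: s.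
  elim: s => [|y s IH] /=; first by rewrite inE.
  rewrite minEle; case: ifP => _; first by rewrite !inE eqxx orbT.
  by move: IH; rewrite !inE => /orP [->|->]; rewrite ?orbT.
case: s foldr_min_in => // y s foldr_min_in _; rewrite /finmin /=.
by move: (foldr_min_in y); rewrite /= !inE => /orP [/eqP->|]; rewrite ?eqxx.
Qed.

Lemma finmin_gt0 (s : seq R) :
  s != [::] -> (forall x, x \in s -> 0 < x) -> 0 < finmin s.
Proof. by move=> s_nil s_gt0; apply/s_gt0/finmin_in. Qed.

Lemma finmin_map_eq (T : eqType) (s : seq T) (f g : T -> R) :
  (forall p, p \in s ->
     exists2 p0, p0 \in s & [/\ f p0 = g p0, f p0 <= f p & f p0 <= g p]) ->
  finmin (map f s) = finmin (map g s).
Proof.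
case: s => [//|p1 s] dom.
have [p sp min_f] := mapP (finmin_in (map f (p1 :: s)) isT).
have [p' sp' min_g] := mapP (finmin_in (map g (p1 :: s)) isT).
have [p0 s0 [e0 le_f _]] := dom p sp.
have [p0' s0' [_ _ le_g]] := dom p' sp'.
apply/eqP; rewrite eq_le; apply/andP; split.
  by rewrite min_g; apply: le_trans (finmin_le (map_f f s0')) le_g.
by rewrite min_f; apply: le_trans (finmin_le (map_f g s0)) _; rewrite -e0.
Qed.

End Finmin.

Lemma divr_sqrtr {R : rcfType} {a : R} : 0 <= a -> a / Num.sqrt a = Num.sqrt a.
Proof.
rewrite le0r => /orP [/eqP->|a_gt0]; first by rewrite mul0r sqrtr0.
rewrite -{1}(sqr_sqrtr (ltW a_gt0)) expr2 -mulrA divff ?mulr1 //.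
by rewrite gt_eqF // sqrtr_gt0.
Qed.

Lemma ler_div_sqrtr (R : rcfType) (t u s : R) :
  0 <= t -> t <= u -> u <= s -> t / Num.sqrt t <= s / Num.sqrt u.
Proof.
move=> t_ge0 le_tu le_us; have u_ge0 := le_trans t_ge0 le_tu.
rewrite divr_sqrtr //; apply: le_trans (ler_wsqrtr le_tu) _.
rewrite -{1}(divr_sqrtr u_ge0); apply: ler_wpM2r => //.
by rewrite invr_ge0 sqrtr_ge0.
Qed.

Section Distances.
Context {R : realType} {d : R}.
Hypothesis d_gt0 : 0 < d.

Lemma muX_gt0 (x xh : R) : x != xh -> 0 < muX d x xh.
Proof.
move=> neq; rewrite /muX divr_gt0 //; last by rewrite mulr_gt0 // exprn_gt0.
by rewrite lt0r sqrf_eq0 subr_eq0 neq sqr_ge0.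
Qed.

Lemma muX_ge0 (x xh : R) : 0 <= muX d x xh.
Proof. by rewrite /muX divr_ge0 ?sqr_ge0 // mulr_ge0 // sqr_ge0. Qed.

Lemma sigB_le_muB (x xh : R) : sigB d x xh <= muB d x xh.
Proof. by rewrite /sigB /muB; case: ifP => _; rewrite ?ler1n. Qed.

Lemma aX_gt0 (N : nat) (x xh : {ffun 'I_N -> R}) : x != xh -> 0 < aX d x xh.
Proof.
move=> neq; have [k neq_k] : exists k, x k != xh k.
  apply/existsP; apply: contraNT neq => /existsPn eq_x.
  by apply/eqP/ffunP => k; apply/eqP/negPn.
rewrite /aX divr_sqrtr ?sqrtr_gt0; last by apply: sumr_ge0 => i /muX_gt0/ltW.
by rewrite (bigD1 k) //= ltr_wpDr ?muX_gt0 // sumr_ge0 // => i /andP [/muX_gt0/ltW].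
Qed.

End Distances.

Lemma sqr_distn (R : numDomainType) (m n : nat) :
  (m%:R - n%:R) ^+ 2 = (`|m - n| ^ 2)%N%:R :> R.
Proof.
wlog le_mn : m n / (m <= n)%N.
  move=> sym; case: (leqP m n) => [|/ltnW] le; first exact: sym.
  by rewrite distnC -sym // -sqrrN opprB.
by rewrite distnEr // natrX natrB // -sqrrN opprB.
Qed.

Definition outer_pair (i j : nat) : bool :=
  ((i == 0) && (j == 3)) || ((i == 3) && (j == 0)).

Definition closer_inner_pair (i0 j0 i j : nat) : bool :=
  [&& ~~ outer_pair i0 j0, `|i0 - j0| <= `|i - j| &
      outer_pair i j ==> (`|i0 - j0| <= 1)]%N.

Section Constellation.
Context {R : realType} {d : R}.
Hypothesis d_gt0 : 0 < d.

Lemma pam_inj : injective (pam d).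
Proof.
move=> i j; rewrite /pam => /(mulIf (lt0r_neq0 d_gt0)) eq_ij.
by apply/val_inj/eqP; rewrite -(eqr_nat R); apply/eqP; lra.
Qed.

Lemma muX_pam (i j : 'I_4) : muX d (pam d i) (pam d j) = (`|i - j| ^ 2)%N%:R.
Proof. by rewrite -sqr_distn /muX /pam; field; rewrite lt0r_neq0. Qed.

Lemma is_s1s4_pam (i j : 'I_4) : is_s1s4 d (pam d i) (pam d j) = outer_pair i j.
Proof.
rewrite /is_s1s4.
have -> : - (3 * d) = pam d ord0 by rewrite /pam /=; lra.
have -> : 3 * d = pam d ord_max by rewrite /pam /=; lra.
by rewrite !(inj_eq pam_inj).
Qed.

Lemma closer_inner_pam (i0 j0 i j : 'I_4) : closer_inner_pair i0 j0 i j ->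
  let x0 := pam d i0 in let y0 := pam d j0 in
  let x := pam d i in let y := pam d j in
  [/\ muB d x0 y0 = muX d x0 y0, sigB d x0 y0 = muX d x0 y0,
      muX d x0 y0 <= muX d x y & muX d x0 y0 <= sigB d x y].
Proof.
case/and3P=> inner le_dist outer /=.
rewrite /muB /sigB !is_s1s4_pam !muX_pam (negbTE inner) ler_nat leq_sqr.
split=> //; case: ifP outer => [_ /= le1|_ _]; last by rewrite ler_nat leq_sqr.
by rewrite -[1]/(1%N%:R) ler_nat -[1%N]/(1 ^ 2)%N leq_sqr.
Qed.

End Constellation.

Definition sym_add (c c' : bool * bool) : bool * bool :=
  (addb c.1 c'.1, addb c.2 c'.2).

Lemma sym_add_eq0 c c' : (sym_add c c' == (false, false)) = (c == c').
Proof. by case: c c' => [[] []] [[] []]. Qed.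

Lemma bits2E (c : bool * bool) : bits2 c = (2 * c.1 + c.2)%N :> nat.
Proof. by rewrite inordK //; case: c => [[] []]. Qed.

Lemma bits2_inj : injective bits2.
Proof. by move=> [[] []] [[] []] /(congr1 (@nat_of_ord 4)); rewrite !bits2E. Qed.

Definition label_index (L : seq nat) (c : bool * bool) : nat :=
  index (2 * c.1 + c.2)%N L.

Lemma perm_label_index (q : {perm 'I_4}) c :
  (q^-1)%g (bits2 c) = label_index [seq val (q i) | i <- enum 'I_4] c :> nat.
Proof.
have qval_inj : injective (fun i => val (q i)) by move=> i j /val_inj/perm_inj.
rewrite /label_index -bits2E -{2}(permKV q (bits2 c)).
by rewrite (index_map qval_inj) index_enum_ord.
Qed.

Lemma gray_closer_inner (L : seq nat) c c' :
  L = [:: 1; 0; 2; 3]%N \/ L = [:: 2; 0; 1; 3]%N -> c != c' ->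
  closer_inner_pair (label_index L (false, false)) (label_index L (sym_add c c'))
                    (label_index L c) (label_index L c').
Proof. by case=> ->; case: c c' => [[] []] [[] []]. Qed.

Definition gray_labeling (q : {perm 'I_4}) : Prop :=
  [seq val (q i) | i <- enum 'I_4] = [:: 1; 0; 2; 3]%N \/
  [seq val (q i) | i <- enum 'I_4] = [:: 2; 0; 1; 3]%N.

Section Labeling.
Context {R : realType} {d : R} {q : {perm 'I_4}}.
Hypothesis d_gt0 : 0 < d.

Lemma Phi_inj : injective (Phi d q).
Proof. by move=> c c' /(pam_inj d_gt0)/perm_inj/bits2_inj. Qed.

Lemma Phi_zero_add_neq c c' :
  (Phi d q (false, false) != Phi d q (sym_add c c')) = (c != c').
Proof. by rewrite (inj_eq Phi_inj) eq_sym sym_add_eq0. Qed.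

Hypothesis gray_q : gray_labeling q.

Lemma Phi_zero_add_bounds c c' : c != c' ->
  let x0 := Phi d q (false, false) in let y0 := Phi d q (sym_add c c') in
  let x := Phi d q c in let y := Phi d q c' in
  [/\ muB d x0 y0 = muX d x0 y0, sigB d x0 y0 = muX d x0 y0,
      muX d x0 y0 <= muX d x y & muX d x0 y0 <= sigB d x y].
Proof.
move=> neq; apply: closer_inner_pam => //.
by rewrite !perm_label_index; apply: gray_closer_inner.
Qed.

End Labeling.

Section Codewords.
Context {R : realType} {d : R} {q : {perm 'I_4}} {N : nat}.
Hypothesis d_gt0 : 0 < d.
Hypothesis gray_q : gray_labeling q.
Implicit Types b : cw N.
Local Notation md := (@modulate R N d q).

Lemma cw_addE b b' k : cw_add b b' k = sym_add (b k) (b' k).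
Proof. by rewrite ffunE. Qed.

Lemma cw_add_eq0 b b' : (cw_add b b' == cw0 N) = (b == b').
Proof.
apply/eqP/eqP => [eq0|->]; apply/ffunP => k; rewrite ?cw_addE ?ffunE.
  by apply/eqP; rewrite -sym_add_eq0 -cw_addE eq0 ffunE.
by apply/eqP; rewrite sym_add_eq0.
Qed.

Lemma modulate_inj : injective md.
Proof.
move=> b b' eq_md; apply/ffunP => k.
have := congr1 (fun x : {ffun _ -> R} => x k) eq_md.
by rewrite !ffunE => /(Phi_inj d_gt0).
Qed.

Lemma modulate_neq b b' k : (md b k != md b' k) = (b k != b' k).
Proof. by rewrite !ffunE (inj_eq (Phi_inj d_gt0)). Qed.

Lemma modulate_zero_add_neq b b' k :
  (md (cw0 N) k != md (cw_add b b') k) = (b k != b' k).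
Proof. by rewrite !ffunE Phi_zero_add_neq. Qed.

Lemma aB_zero_add b b' :
  aB d (md (cw0 N)) (md (cw_add b b')) = aX d (md (cw0 N)) (md (cw_add b b')).
Proof.
rewrite /aB /aX; congr (_ / Num.sqrt _); apply: eq_bigr => k;
  by rewrite modulate_zero_add_neq !ffunE => /(Phi_zero_add_bounds d_gt0 gray_q) [].
Qed.

Lemma aX_zero_add_le b b' :
  aX d (md (cw0 N)) (md (cw_add b b')) <= aX d (md b) (md b') /\
  aX d (md (cw0 N)) (md (cw_add b b')) <= aB d (md b) (md b').
Proof.
rewrite /aX /aB !(eq_bigl _ _ (modulate_neq b b')).
rewrite !(eq_bigl _ _ (modulate_zero_add_neq b b')).
have sum_ge0 :
    0 <= \sum_(k | b k != b' k) muX d (md (cw0 N) k) (md (cw_add b b') k).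
  by apply: sumr_ge0 => k _; apply: muX_ge0.
have bounds k := Phi_zero_add_bounds d_gt0 gray_q (b k) (b' k).
split; apply: ler_div_sqrtr => //; apply: ler_sum => // k;
  by rewrite ?sigB_le_muB // !ffunE => /bounds [].
Qed.

Context {B : {set cw N}}.

Lemma mindist_aX_eq_aB :
  binary_linear_code B -> mindist (@aX R N d) d q B = mindist (@aB R N d) d q B.
Proof.
case=> B0 B_add; apply: finmin_map_eq => p.
rewrite mem_enum inE => /and3P [Bp1 Bp2 neq].
exists (cw0 N, cw_add p.1 p.2); last first.
  by rewrite /= aB_zero_add; split=> //; case: (aX_zero_add_le p.1 p.2).
rewrite mem_enum inE /= B0 B_add // (inj_eq modulate_inj) eq_sym cw_add_eq0.
by rewrite -(inj_eq modulate_inj).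
Qed.

Lemma mindist_aX_gt0 : (1 < #|B|)%N -> 0 < mindist (@aX R N d) d q B.
Proof.
case/card_gt1P=> b [b' [Bb Bb' neq]]; apply: finmin_gt0.
  have pair_in : (b, b') \in enum [set p : cw N * cw N | [&& p.1 \in B, p.2 \in B &
                                       md p.1 != md p.2]].
    by rewrite mem_enum inE /= Bb Bb' (inj_eq modulate_inj).
  by apply: contraTneq (map_f (fun p => aX d (md p.1) (md p.2)) pair_in) => ->.
move=> x /mapP [p]; rewrite mem_enum inE => /and3P [_ _ neq_p] ->.
exact: aX_gt0.
Qed.

End Codewords.

Theorem theorem2 (R : realType) (d : R) (N : nat) (q : {perm 'I_4})
  (B : {set cw N}) :
  0 < d ->
  ([seq val (q i) | i <- enum 'I_4] = [:: 1; 0; 2; 3]%N \/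
   [seq val (q i) | i <- enum 'I_4] = [:: 2; 0; 1; 3]%N) ->
  binary_linear_code B ->
  (1 < #|B|)%N ->
  loss d q B = 0.
Proof.
move=> d_gt0 gray_q linB card_B.
rewrite /loss -(mindist_aX_eq_aB d_gt0 gray_q linB).
by rewrite divff ?gt_eqF ?(mindist_aX_gt0 d_gt0) // /log10 ln1 mul0r mulr0.
Qed.
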